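(* (Deterministic error bounds, exact sparsity.) Let $\hat\Gamma\in\mathbb R^{q\times q}$ be symmetric positive semidefinite, $\hat\gamma\in\mathbb R^q$, and $\beta^*\in\mathbb R^q$. Let $J=\mathrm{supp}(\beta^* )$ with $|J|=k$ and $J^C\ne\emptyset$. Let $w_j\ge0$ be weights with $\min_{j\in J^C}w_j=1$, and set $r_w=\max_{j\in J}w_j$ (with value $0$ if $J=\emptyset$). Let $\lambda>0$, and let $\hat\beta$ be any minimizer of $-2\beta'\hat\gamma+\beta'\hat\Gamma\beta+\lambda\sum_j w_j|\beta_j|$. Suppose the following hold: - $\|\hat\gamma-\hat\Gamma\beta^*\|_\infty\le\lambda/4$; - there exist $\alpha>0$ and $\tau\ge0$ with $\theta'\hat\Gamma\theta\ge\alpha\|\theta\|_2^2-\tau\|\theta\|_1^2$ for all $\theta\in\mathbb R^q$; - $4(1+r_w)^2k\tau\le\alpha/2$. Then $$\|\hat\beta-\beta^*\|_2\le\frac{1+2r_w}{\alpha}\sqrt k\,\lambda,\qquad \|\hat\beta-\beta^*\|_1\le\frac{2+6r_w+4r_w^2}{\alpha}k\lambda,$$ $$(\hat\beta-\beta^* )'\hat\Gamma(\hat\beta-\beta^* )\le\frac{(1+2r_w)^2}{2\alpha}k\lambda^2 .$$ If $J\ne\emptyset$ and $s_0=\min_{j\in J}|\beta^*_j|$, then $$|\mathrm{supp}(\beta^* )\setminus\mathrm{supp}(\hat\beta)|\le\frac{2+6r_w+4r_w^2}{s_0\alpha}k\lambda .$$ Finally, for $\tilde\beta_j=\hat\beta_j\mathbf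 1(|\hat\beta_j|>\lambda)$, $$|\mathrm{supp}(\tilde\beta)\setminus\mathrm{supp}(\beta^* )|\le(1+2r_w)^2k/\alpha .$$
   Context: $\|\cdot\|_1,\|\cdot\|_2,\|\cdot\|_\infty$ are the usual vector norms and $\mathrm{supp}(v)=\{j:v_j\neq0\}$. *)

From HB Require Import structures.
From mathcomp Require Import all_boot all_order all_algebra.
From mathcomp Require Import reals.
Set Implicit Arguments. Unset Strict Implicit. Unset Printing Implicit Defensive.
Import Order.TTheory GRing.Theory Num.Theory.
Local Open Scope ring_scope.

Definition norm1 {R : realType} {q : nat} (v : 'cV[R]_q) : R :=
  \sum_(j < q) `|v j 0|.
Definition norm2 {R : realType} {q : nat} (v : 'cV[R]_q) : R :=
  Num.sqrt (\sum_(j < q) v j 0 ^+ 2).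
Definition norminf {R : realType} {q : nat} (v : 'cV[R]_q) : R :=
  \big[Num.max/0]_(j < q) `|v j 0|.
Definition supp {R : realType} {q : nat} (v : 'cV[R]_q) : {set 'I_q} :=
  [set j | v j 0 != 0].
Definition qform {R : realType} {q : nat} (G : 'M[R]_q) (v : 'cV[R]_q) : R :=
  (v^T *m G *m v) 0 0.
Definition dotv {R : realType} {q : nat} (u v : 'cV[R]_q) : R := (u^T *m v) 0 0.
Definition lasso_obj {R : realType} {q : nat} (G : 'M[R]_q) (g : 'cV[R]_q)
  (w : 'I_q -> R) (lam : R) (b : 'cV[R]_q) : R :=
  - 2 * dotv b g + qform G b + lam * \sum_(j < q) w j * `|b j 0|.
Definition hthresh {R : realType} {q : nat} (lam : R) (b : 'cV[R]_q) : 'cV[R]_q :=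
  \col_j (if lam < `|b j 0| then b j 0 else 0).

From HB Require Import structures.
From mathcomp Require Import all_boot all_order all_algebra.
From mathcomp Require Import reals lra ring.
Set Implicit Arguments. Unset Strict Implicit. Unset Printing Implicit Defensive.
Import Order.TTheory GRing.Theory Num.Theory.
Local Open Scope ring_scope.

(* Write d = bhat - bstar and split its l1 norm into the part S_J on the
   support J of bstar and the part S_Jc off it.  Comparing the objective at
   bhat and at bstar, the l1/linf Hoelder bound on the noise term and a lower
   bound on the penalty gap give the basic inequality
       2 d'Gd + lam S_Jc <= lam (1 + 2 rw) S_J.
   Positive semidefiniteness then puts d in the cone S_Jc <= (1 + 2 rw) S_J,
   on which |d|_1^2 <= 4 (1 + rw)^2 k |d|_2^2, so the restricted eigenvalue
   condition and the smallness of tau yield d'Gd >= alpha/2 |d|_2^2.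
   Together with Cauchy-Schwarz S_J <= sqrt k |d|_2 this gives
   alpha |d|_2 <= c := (1 + 2 rw) sqrt k lam, from which the l2, l1 and
   prediction bounds follow; the two support bounds are counting arguments
   on |d|_1 and on S_Jc respectively. *)

Section FiniteSums.
Variables (R : realDomainType) (I : finType).

Lemma ler_sum_subset (A B : pred I) (F : I -> R) :
  (forall j, A j -> B j) -> (forall j, 0 <= F j) ->
  \sum_(j | A j) F j <= \sum_(j | B j) F j.
Proof.
move=> AB F0; rewrite [X in X <= _]big_mkcond [X in _ <= X]big_mkcond /=.
apply: ler_sum => j _; case: ifP => [/AB -> // | _]; by case: ifP.
Qed.

Lemma card_mul_le_sum (A : {set I}) (B : pred I) (F : I -> R) (m : R) :
  (forall j, j \in A -> B j) -> (forall j, 0 <= F j) ->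
  (forall j, j \in A -> m <= F j) ->
  #|A|%:R * m <= \sum_(j | B j) F j.
Proof.
move=> AB F0 Fm.
apply: (le_trans _ (ler_sum_subset (A := fun j => j \in A) AB F0)).
by rewrite -sumr_const mulr_suml; apply: ler_sum => j /Fm; rewrite mul1r.
Qed.

Lemma sqr_sum_le_card (J : {set I}) (x : I -> R) :
  (\sum_(j in J) x j) ^+ 2 <= #|J|%:R * \sum_(j in J) x j ^+ 2.
Proof.
set S := \sum_(j in J) x j; set k := #|J|%:R.
have expand : \sum_(j in J) (k * x j - S) ^+ 2
    = k * (k * \sum_(j in J) x j ^+ 2 - S ^+ 2).
  have sqE j : (k * x j - S) ^+ 2 = k ^+ 2 * x j ^+ 2 - (2 * k * S) * x j + S ^+ 2.
    by ring.
  under eq_bigr do rewrite sqE.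
  rewrite big_split sumrB /= -!mulr_sumr sumr_const -/S -mulr_natl -/k; ring.
have nonneg : 0 <= \sum_(j in J) (k * x j - S) ^+ 2.
  by apply: sumr_ge0 => j _; apply: sqr_ge0.
have [k0 | kpos] := eqVneq k 0.
  move/eqP: k0; rewrite /k pnatr_eq0 => /eqP/cards0_eq J0.
  by rewrite /S J0 !big_set0 expr0n mulr0.
have k_gt0 : 0 < k by rewrite lt0r kpos ler0n.
by rewrite -subr_ge0 -(pmulr_rge0 _ k_gt0) -expand.
Qed.

End FiniteSums.

Section VectorFacts.
Variables (R : realType) (q : nat).
Implicit Types (u v x : 'cV[R]_q) (G : 'M[R]_q).

Lemma dotvE u v : dotv u v = \sum_j u j 0 * v j 0.
Proof. by rewrite /dotv !mxE; apply: eq_bigr => j _; rewrite mxE. Qed.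

Lemma dotvDl u v x : dotv (u + v) x = dotv u x + dotv v x.
Proof. by rewrite !dotvE -big_split; apply: eq_bigr => j _; rewrite mxE mulrDl. Qed.

Lemma dotvBr u v x : dotv u (v - x) = dotv u v - dotv u x.
Proof. by rewrite !dotvE -sumrB; apply: eq_bigr => j _; rewrite !mxE mulrBr. Qed.

Lemma qformD G u v : G^T = G ->
  qform G (u + v) = qform G u + 2 * dotv v (G *m u) + qform G v.
Proof.
move=> GT; have cross : (u^T *m G *m v) 0 0 = (v^T *m (G *m u)) 0 0.
  have tr : (u^T *m G *m v)^T 0 0 = (u^T *m G *m v) 0 0 by rewrite mxE.
  by rewrite -tr !trmx_mul trmxK GT mulmxA.
rewrite /qform /dotv [(u + v)^T]linearD /= !mulmxDl !mulmxDr -[v^T *m G *m u]mulmxA.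
rewrite !mxE; move: cross; rewrite !mxE => ->; ring.
Qed.

Lemma dotv_le_norm1_norminf u v : `|dotv u v| <= norminf v * norm1 u.
Proof.
rewrite dotvE /norm1 mulr_sumr; apply: le_trans (ler_norm_sum _ _ _) _.
apply: ler_sum => j _; rewrite normrM mulrC ler_wpM2r //.
exact: (le_bigmax _ (fun j => `|v j 0|) j).
Qed.

Lemma norm1_split (J : {set 'I_q}) u :
  norm1 u = \sum_(j in J) `|u j 0| + \sum_(j | j \notin J) `|u j 0|.
Proof. exact: bigID. Qed.

Lemma sum_abs_le_norm2 (J : {set 'I_q}) u :
  \sum_(j in J) `|u j 0| <= Num.sqrt #|J|%:R * norm2 u.
Proof.
have N0 : 0 <= \sum_j u j 0 ^+ 2 by apply: sumr_ge0 => j _; apply: sqr_ge0.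
have sq : (\sum_(j in J) `|u j 0|) ^+ 2 <= (Num.sqrt #|J|%:R * norm2 u) ^+ 2.
  rewrite exprMn /norm2 !sqr_sqrtr ?ler0n //.
  apply: le_trans (sqr_sum_le_card J (fun j => `|u j 0|)) _.
  rewrite ler_wpM2l ?ler0n //.
  under eq_bigr do rewrite real_normK ?num_real //.
  by apply: ler_sum_subset => // j; apply: sqr_ge0.
by rewrite -ler_sqr ?nnegrE ?mulr_ge0 ?sqrtr_ge0 ?sumr_ge0.
Qed.

End VectorFacts.

Definition wnorm1 {R : realType} {q : nat} (w : 'I_q -> R) (b : 'cV[R]_q) : R :=
  \sum_(j < q) w j * `|b j 0|.

Lemma lasso_obj_gap (R : realType) (q : nat) (G : 'M[R]_q) (g b0 b : 'cV[R]_q)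
    (w : 'I_q -> R) (lam : R) : G^T = G ->
  lasso_obj G g w lam b - lasso_obj G g w lam b0 =
  qform G (b - b0) - 2 * dotv (b - b0) (g - G *m b0)
  + lam * (wnorm1 w b - wnorm1 w b0).
Proof.
move=> G_sym; set d := b - b0; have -> : b = b0 + d by rewrite addrC subrK.
rewrite /lasso_obj qformD // dotvDl dotvBr -/(wnorm1 w _) -/(wnorm1 w b0).
ring.
Qed.

Section LassoErrorBounds.
Variables (R : realType) (q : nat) (G : 'M[R]_q) (g bstar bhat : 'cV[R]_q)
  (w : 'I_q -> R) (lam alpha tau : R).

Local Notation J := (supp bstar).
Local Notation k := #|supp bstar|.
Local Notation rw := (\big[Num.max/0]_(j in supp bstar) w j).
Local Notation d := (bhat - bstar).
Local Notation SJ := (\sum_(j in supp bstar) `|(bhat - bstar) j 0|).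
Local Notation SJc := (\sum_(j | j \notin supp bstar) `|(bhat - bstar) j 0|).
Local Notation c := ((1 + 2 * rw) * Num.sqrt k%:R * lam).

Hypothesis G_sym : G^T = G.
Hypothesis G_psd : forall th : 'cV[R]_q, 0 <= qform G th.
Hypothesis w_ge0 : forall j, 0 <= w j.
Hypothesis w_offJ : forall j, j \notin J -> 1 <= w j.
Hypothesis lam_gt0 : 0 < lam.
Hypothesis bhat_min :
  forall b : 'cV[R]_q, lasso_obj G g w lam bhat <= lasso_obj G g w lam b.
Hypothesis noise_small : norminf (g - G *m bstar) <= lam / 4.
Hypothesis alpha_gt0 : 0 < alpha.
Hypothesis tau_ge0 : 0 <= tau.
Hypothesis restricted_eigenvalue :
  forall th : 'cV[R]_q, alpha * norm2 th ^+ 2 - tau * norm1 th ^+ 2 <= qform G th.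
Hypothesis tau_small : 4 * (1 + rw) ^+ 2 * k%:R * tau <= alpha / 2.

Lemma rw_ge0 : 0 <= rw.
Proof. by apply: (big_ind (fun x => 0 <= x)) => // x y x0 y0; rewrite le_max x0. Qed.

Lemma w_le_rw j : j \in J -> w j <= rw.
Proof. exact: le_bigmax_cond. Qed.

Lemma bstar_offJ j : j \notin J -> bstar j 0 = 0.
Proof. by rewrite inE negbK => /eqP. Qed.

Lemma SJ_ge0 : 0 <= SJ.
Proof. exact: sumr_ge0. Qed.

Lemma SJc_ge0 : 0 <= SJc.
Proof. exact: sumr_ge0. Qed.

(* Off J the penalty grows by at least |d_j| (w_j >= 1, bstar_j = 0); on J
   it can drop by at most w_j |d_j| <= rw |d_j| (triangle inequality). *)
Lemma penalty_gap : SJc - rw * SJ <= wnorm1 w bhat - wnorm1 w bstar.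
Proof.
rewrite /wnorm1 -sumrB [X in _ <= X](bigID (fun j => j \in J)) /= addrC.
rewrite mulr_sumr -sumrN; apply: lerD; apply: ler_sum => j jJ.
- rewrite !mxE bstar_offJ // normr0 mulr0 subr0 oppr0 addr0.
  by rewrite -[X in X <= _]mul1r ler_wpM2r ?w_offJ.
- have tri : `|bstar j 0| - `|bhat j 0| <= `|d j 0|.
    by rewrite !mxE distrC; apply: le_trans (ler_norm _) (ler_dist_dist _ _).
  have := w_le_rw jJ; have := w_ge0 j; have := normr_ge0 (d j 0); nra.
Qed.

Lemma basic_inequality : 2 * qform G d + lam * SJc <= lam * (1 + 2 * rw) * SJ.
Proof.
have opt : qform G d - 2 * dotv d (g - G *m bstar)
           + lam * (wnorm1 w bhat - wnorm1 w bstar) <= 0.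
  by rewrite -lasso_obj_gap // subr_le0.
have noise : `|dotv d (g - G *m bstar)| <= lam / 4 * (SJ + SJc).
  rewrite -norm1_split; apply: le_trans (dotv_le_norm1_norminf _ _) _.
  by rewrite ler_wpM2r // sumr_ge0.
have pen := ler_wpM2l (ltW lam_gt0) penalty_gap.
move: noise; rewrite ler_norml => /andP [_ noise]; nra.
Qed.

Lemma error_in_cone : SJc <= (1 + 2 * rw) * SJ.
Proof.
rewrite -(ler_pM2l lam_gt0); have := G_psd d; have := basic_inequality; lra.
Qed.

Lemma norm1_le_SJ : norm1 d <= 2 * (1 + rw) * SJ.
Proof. by rewrite (norm1_split J); have := error_in_cone; lra. Qed.

Lemma sqr_SJ_le : SJ ^+ 2 <= k%:R * norm2 d ^+ 2.
Proof.
rewrite -[k%:R](@sqr_sqrtr _ k%:R) ?ler0n // -exprMn.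
by rewrite ler_sqr ?nnegrE ?SJ_ge0 ?mulr_ge0 ?sqrtr_ge0 ?sum_abs_le_norm2.
Qed.

(* On the cone, the restricted eigenvalue condition gives curvature alpha/2:
   tau |d|_1^2 <= 4 (1 + rw)^2 k tau |d|_2^2 <= alpha/2 |d|_2^2. *)
Lemma curvature_on_cone : alpha / 2 * norm2 d ^+ 2 <= qform G d.
Proof.
have r0 := rw_ge0.
have n1 : norm1 d ^+ 2 <= (2 * (1 + rw) * SJ) ^+ 2.
  by rewrite ler_sqr ?nnegrE ?sumr_ge0 ?norm1_le_SJ ?mulr_ge0 ?SJ_ge0 //; lra.
have n1_n2 : norm1 d ^+ 2 <= 4 * (1 + rw) ^+ 2 * k%:R * norm2 d ^+ 2.
  have c4 : 0 <= 4 * (1 + rw) ^+ 2 by rewrite mulr_ge0 ?sqr_ge0.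
  by have := ler_wpM2l c4 sqr_SJ_le; lra.
have := ler_wpM2l tau_ge0 n1_n2; have := restricted_eigenvalue d.
have := ler_wpM2r (sqr_ge0 (norm2 d)) tau_small; lra.
Qed.

Lemma c_ge0 : 0 <= c.
Proof. by rewrite !mulr_ge0 ?sqrtr_ge0 ?ltW //; have := rw_ge0; lra. Qed.

Lemma sqr_c : c ^+ 2 = (1 + 2 * rw) ^+ 2 * k%:R * lam ^+ 2.
Proof. by rewrite !exprMn sqr_sqrtr ?ler0n. Qed.

Lemma basic_inequality_norm2 : 2 * qform G d + lam * SJc <= c * norm2 d.
Proof.
have w0 : 0 <= lam * (1 + 2 * rw) by rewrite mulr_ge0 ?ltW //; have := rw_ge0; lra.
by have := ler_wpM2l w0 (sum_abs_le_norm2 J d); have := basic_inequality; lra.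
Qed.

Lemma norm2_le_c : norm2 d <= c / alpha.
Proof.
rewrite ler_pdivlMr // mulrC.
have [n0 | npos] := eqVneq (norm2 d) 0; first by rewrite n0 mulr0 c_ge0.
have n_gt0 : 0 < norm2 d by rewrite lt0r npos sqrtr_ge0.
rewrite -(ler_pM2r n_gt0); have := curvature_on_cone; have := basic_inequality_norm2.
have := ler_wpM2l (ltW lam_gt0) SJc_ge0; rewrite mulr0; lra.
Qed.

Lemma c_norm2_le : c * norm2 d <= c ^+ 2 / alpha.
Proof.
rewrite (_ : c ^+ 2 / alpha = c * (c / alpha)); last by ring.
exact: (ler_wpM2l c_ge0 norm2_le_c).
Qed.

Lemma norm2_error_bound : norm2 d <= (1 + 2 * rw) / alpha * Num.sqrt k%:R * lam.
Proof.
have -> : (1 + 2 * rw) / alpha * Num.sqrt k%:R * lam = c / alpha.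
  by field; exact: lt0r_neq0.
exact: norm2_le_c.
Qed.

Lemma norm1_error_bound :
  norm1 d <= (2 + 6 * rw + 4 * rw ^+ 2) / alpha * k%:R * lam.
Proof.
have s0 := sqrtr_ge0 (k%:R : R); have r0 := rw_ge0.
have -> : (2 + 6 * rw + 4 * rw ^+ 2) / alpha * k%:R * lam
          = 2 * (1 + rw) * (Num.sqrt k%:R * (c / alpha)).
  by rewrite -[k%:R in LHS](@sqr_sqrtr _ k%:R) ?ler0n //; field; exact: lt0r_neq0.
apply: le_trans norm1_le_SJ (ler_wpM2l _ _); first lra.
apply: le_trans (sum_abs_le_norm2 J d) _.
exact: (ler_wpM2l s0 norm2_le_c).
Qed.

Lemma qform_error_bound :
  qform G d <= (1 + 2 * rw) ^+ 2 / (2 * alpha) * k%:R * lam ^+ 2.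
Proof.
have -> : (1 + 2 * rw) ^+ 2 / (2 * alpha) * k%:R * lam ^+ 2 = c ^+ 2 / alpha / 2.
  by rewrite sqr_c; field; exact: lt0r_neq0.
have := c_norm2_le; have := basic_inequality_norm2.
have := ler_wpM2l (ltW lam_gt0) SJc_ge0; rewrite mulr0; lra.
Qed.

Lemma offJ_mass_bound : SJc <= (1 + 2 * rw) ^+ 2 * k%:R * lam / alpha.
Proof.
rewrite -(ler_pM2l lam_gt0).
have -> : lam * ((1 + 2 * rw) ^+ 2 * k%:R * lam / alpha) = c ^+ 2 / alpha.
  by rewrite sqr_c; field; exact: lt0r_neq0.
by apply: le_trans c_norm2_le; have := basic_inequality_norm2; have := G_psd d; lra.
Qed.

(* Each true coefficient missed by bhat contributes at least s0 to |d|_1. *)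
Lemma missed_support_bound (s0 : R) :
  (exists2 j, j \in J & `|bstar j 0| = s0) ->
  (forall j, j \in J -> s0 <= `|bstar j 0|) ->
  #|J :\: supp bhat|%:R <= (2 + 6 * rw + 4 * rw ^+ 2) / (s0 * alpha) * k%:R * lam.
Proof.
move=> [j0 j0J <-] s0_min.
have s0_gt0 : 0 < `|bstar j0 0| by rewrite normr_gt0; move: j0J; rewrite inE.
have count : #|J :\: supp bhat|%:R * `|bstar j0 0| <= norm1 d.
  apply: card_mul_le_sum => // j; rewrite in_setD inE negbK => /andP [/eqP bh0 jJ].
  by rewrite !mxE bh0 sub0r normrN s0_min.
have -> : (2 + 6 * rw + 4 * rw ^+ 2) / (`|bstar j0 0| * alpha) * k%:R * lam
          = (2 + 6 * rw + 4 * rw ^+ 2) / alpha * k%:R * lam / `|bstar j0 0|.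
  by field; rewrite !lt0r_neq0.
by rewrite ler_pdivlMr //; apply: le_trans count norm1_error_bound.
Qed.

(* Each false positive of the thresholded estimator contributes more than lam
   to S_Jc. *)
Lemma false_positive_bound :
  #|supp (hthresh lam bhat) :\: J|%:R <= (1 + 2 * rw) ^+ 2 * k%:R / alpha.
Proof.
have count : #|supp (hthresh lam bhat) :\: J|%:R * lam <= SJc.
  apply: card_mul_le_sum => [j | j | j]; first by rewrite in_setD => /andP [].
    exact: normr_ge0.
  rewrite in_setD => /andP [jJ]; rewrite inE !mxE bstar_offJ // subr0.
  by case: ifP => [/ltW | _]; rewrite ?eqxx.
rewrite -(ler_pM2r lam_gt0); apply: le_trans count _.
by rewrite mulrAC; exact: offJ_mass_bound.
Qed.

Lemma lasso_error_bounds :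
  [/\ norm2 d <= (1 + 2 * rw) / alpha * Num.sqrt k%:R * lam,
      norm1 d <= (2 + 6 * rw + 4 * rw ^+ 2) / alpha * k%:R * lam,
      qform G d <= (1 + 2 * rw) ^+ 2 / (2 * alpha) * k%:R * lam ^+ 2,
      (forall s0 : R,
         (exists2 j, j \in J & `|bstar j 0| = s0) ->
         (forall j, j \in J -> s0 <= `|bstar j 0|) ->
         #|J :\: supp bhat|%:R <= (2 + 6 * rw + 4 * rw ^+ 2) / (s0 * alpha) * k%:R * lam)
    & #|supp (hthresh lam bhat) :\: J|%:R <= (1 + 2 * rw) ^+ 2 * k%:R / alpha].
Proof.
split; [exact: norm2_error_bound | exact: norm1_error_bound | exact: qform_error_bound
       | exact: missed_support_bound | exact: false_positive_bound].
Qed.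

End LassoErrorBounds.

Theorem mainTheorem2 (R : realType) (q : nat) (G : 'M[R]_q) (g bstar bhat : 'cV[R]_q)
  (w : 'I_q -> R) (lam alpha tau : R) :
  G^T = G ->
  (forall th : 'cV[R]_q, 0 <= qform G th) ->
  (exists j, j \notin supp bstar) ->
  (forall j, 0 <= w j) ->
  (exists2 j, j \notin supp bstar & w j = 1) ->
  (forall j, j \notin supp bstar -> 1 <= w j) ->
  0 < lam ->
  (forall b : 'cV[R]_q, lasso_obj G g w lam bhat <= lasso_obj G g w lam b) ->
  norminf (g - G *m bstar) <= lam / 4 ->
  0 < alpha -> 0 <= tau ->
  (forall th : 'cV[R]_q, alpha * norm2 th ^+ 2 - tau * norm1 th ^+ 2 <= qform G th) ->
  let J := supp bstar in
  let k := #|J| in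
  let rw := \big[Num.max/0]_(j in J) w j in
  4 * (1 + rw) ^+ 2 * k%:R * tau <= alpha / 2 ->
  [/\ norm2 (bhat - bstar) <= (1 + 2 * rw) / alpha * Num.sqrt k%:R * lam,
      norm1 (bhat - bstar) <= (2 + 6 * rw + 4 * rw ^+ 2) / alpha * k%:R * lam,
      qform G (bhat - bstar) <= (1 + 2 * rw) ^+ 2 / (2 * alpha) * k%:R * lam ^+ 2,
      (forall s0 : R, J != set0 ->
         (exists2 j, j \in J & `|bstar j 0| = s0) ->
         (forall j, j \in J -> s0 <= `|bstar j 0|) ->
         #|J :\: supp bhat|%:R <= (2 + 6 * rw + 4 * rw ^+ 2) / (s0 * alpha) * k%:R * lam)
    & #|supp (hthresh lam bhat) :\: J|%:R <= (1 + 2 * rw) ^+ 2 * k%:R / alpha].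
Proof.
move=> G_sym G_psd _ w_ge0 _ w_offJ lam_gt0 bhat_min noise_small alpha_gt0 tau_ge0 RE.
move=> J k rw tau_small; rewrite {}/rw {}/k {}/J in tau_small *.
have [l2 l1 pred missed false_pos] := lasso_error_bounds G_sym G_psd w_ge0 w_offJ
  lam_gt0 bhat_min noise_small alpha_gt0 tau_ge0 RE tau_small.
by split=> // s0 _; apply: missed.
Qed.
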